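(* Assume $G$ is connected. Let $S\subset V$ with $\emptyset\ne S\ne V$, and let $R_S=\mathrm{vol}\,S/\mathrm{vol}\,V$; assume $R_S\ne\frac12$. Let $\lambda_2>0$ be the second smallest eigenvalue of $\Delta$. If $$\tau>\tau_t(S):=\frac1{\lambda_2}\log\left(\frac{(\mathrm{vol}\,S)^{1/2}(\mathrm{vol}\,S^c)^{1/2}}{(\mathrm{vol}\,V)^{1/2}\,|R_S-\frac12|\,d_-^{r/2}}\right),$$ then the set $S'=\{i\in V:(e^{-\tau\Delta}\chi_S)_i\ge\frac12\}$ equals $V$ if $R_S>\frac12$, and equals $\emptyset$ if $R_S<\frac12$.
   Context: $G=(V,E)$ is a finite undirected weighted graph with vertex set $V=\{1,\dots,n\}$. The weights satisfy $\omega_{ij}=\omega_{ji}\ge0$, with $\omega_{ij}>0$ iff $\{i,j\}\in E$, and $\omega_{ii}=0$. The degrees are $d_i=\sum_j\omega_{ij}>0$, and $d_-=\min_id_i$. A parameter $r\in[0,1]$ is fixed. For $S\subset V$, $S^c=V\setminus S$, $\chi_S$ is the indicator of $S$, and $\mathrm{vol}\,S=\sum_{i\in S}d_i^r$. The graph Laplacian is $(\Delta u)_i=d_i^{-r}\sum_j\omega_{ij}(u_i-u_j)$, whose eigenvalues (those of the matrix $D^{-r}(D-A)$) are $0=\lambda_1\le\lambda_2\le\dots\le\lambda_n$. $e^{-t\Delta}$ is the solution operator of $\dot u=-\Delta u$. *)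

From Stdlib Require Import Reals Lra.
Open Scope R_scope.

(* Vertices are 0 .. n-1 (the paper's 1 .. n shifted by one).
   Weights: w : nat -> nat -> R, only the values on 0..n-1 matter. *)

Fixpoint rsum (n : nat) (f : nat -> R) : R :=
  match n with
  | O => 0
  | S m => rsum m f + f m
  end.

Fixpoint rminn (f : nat -> R) (m : nat) : R :=
  match m with
  | O => f 0%nat
  | S k => Rmin (rminn f k) (f (S k))
  end.

Definition deg (n : nat) (w : nat -> nat -> R) (i : nat) : R :=
  rsum n (fun j => w i j).

Definition dmin (n : nat) (w : nat -> nat -> R) : R :=
  rminn (deg n w) (n - 1).

Definition weighted_graph (n : nat) (w : nat -> nat -> R) : Prop :=
  (forall i j, (i < n)%nat -> (j < n)%nat -> w i j = w j i) /\
  (forall i j, (i < n)%nat -> (j < n)%nat -> 0 <= w i j) /\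
  (forall i, (i < n)%nat -> w i i = 0) /\
  (forall i, (i < n)%nat -> 0 < deg n w i).

Inductive reach (n : nat) (w : nat -> nat -> R) (i : nat) : nat -> Prop :=
  | reach_refl : reach n w i i
  | reach_step : forall j k, reach n w i j -> (k < n)%nat -> 0 < w j k ->
                 reach n w i k.

Definition connected (n : nat) (w : nat -> nat -> R) : Prop :=
  forall i j, (i < n)%nat -> (j < n)%nat -> reach n w i j.

Definition chi (S : nat -> bool) (i : nat) : R := if S i then 1 else 0.

Definition vol (n : nat) (w : nat -> nat -> R) (r : R) (S : nat -> bool) : R :=
  rsum n (fun i => chi S i * Rpower (deg n w i) r).

Definition complement (S : nat -> bool) : nat -> bool := fun i => negb (S i).
Definition fullset : nat -> bool := fun _ => true.

Definition lap (n : nat) (w : nat -> nat -> R) (r : R) (u : nat -> R) (i : nat) : R :=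
  / Rpower (deg n w i) r * rsum n (fun j => w i j * (u i - u j)).

(* lam 0 <= lam 1 <= ... <= lam (n-1) is the list of eigenvalues of
   Delta = D^{-r}(D - A), counted with multiplicity: it is sorted, and there is
   a basis v 0, ..., v (n-1) of R^n of eigenvectors with Delta (v k) = lam k v k.
   (Delta is self-adjoint for the d^r-weighted inner product, hence diagonalizable,
   so this list exists and is unique.) *)
Definition eigenvalue_list (n : nat) (w : nat -> nat -> R) (r : R) (lam : nat -> R) : Prop :=
  (forall k, (S k < n)%nat -> lam k <= lam (S k)) /\
  exists v : nat -> nat -> R,
    (forall k i, (k < n)%nat -> (i < n)%nat -> lap n w r (v k) i = lam k * v k i) /\
    (forall c : nat -> R,
        (forall i, (i < n)%nat -> rsum n (fun k => c k * v k i) = 0) ->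
        forall k, (k < n)%nat -> c k = 0).

(* u is the solution of du/dt = - Delta u with u(0) = u0, i.e. u t = e^{-t Delta} u0 *)
Definition heat_solution (n : nat) (w : nat -> nat -> R) (r : R)
    (u0 : nat -> R) (u : R -> nat -> R) : Prop :=
  (forall i, (i < n)%nat -> u 0 i = u0 i) /\
  (forall i t, (i < n)%nat ->
     derivable_pt_lim (fun s => u s i) t (- lap n w r (u t) i)).

(* Let [R = R_S] and [E(t) = <u(t) - R, u(t) - R>] in the inner product weighted by
   [d_i^r]. The mass [<u(t), 1>] is conserved, so [u(t) - R] stays orthogonal to the
   constants, where the Poincare inequality [lam_2 <f, f> <= B(f, f)] holds (expand [f]
   in the eigenbasis). Hence [E' = -2 B <= -2 lam_2 E] and
   [E(t) <= exp (-2 lam_2 t) vol S vol S^c / vol V]. As [d_-^r (u_i(t) - R)^2 <= E(t)],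
   for [tau > tau_t(S)] every [u_i(tau)] lies within [|R - 1/2|] of [R], i.e. on the same
   side of [1/2]. Connectivity gives [lam_2 > 0], and one vertex in [S] and one outside
   give [E(0) > d_-^r (R - 1/2)^2], so that [tau_t(S) > 0]. *)

From Stdlib Require Import Reals Lra Lia Classical.
Open Scope R_scope.

Lemma rsum_ext n f g : (forall i, (i < n)%nat -> f i = g i) -> rsum n f = rsum n g.
Proof.
  induction n as [|n IH]; intros Hfg; simpl; [reflexivity|].
  rewrite IH by (intros; apply Hfg; lia). now rewrite Hfg by lia.
Qed.

Lemma rsum_zero n : rsum n (fun _ => 0) = 0.
Proof. induction n; simpl; lra. Qed.

Lemma rsum_add n f g : rsum n (fun i => f i + g i) = rsum n f + rsum n g.
Proof. induction n; simpl; lra. Qed.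

Lemma rsum_sub n f g : rsum n (fun i => f i - g i) = rsum n f - rsum n g.
Proof. induction n; simpl; lra. Qed.

Lemma rsum_opp n f : rsum n (fun i => - f i) = - rsum n f.
Proof. induction n; simpl; lra. Qed.

Lemma rsum_mull n a f : rsum n (fun i => a * f i) = a * rsum n f.
Proof. induction n; simpl; [lra|]. rewrite IHn; ring. Qed.

Lemma rsum_mulr n a f : rsum n (fun i => f i * a) = rsum n f * a.
Proof. induction n; simpl; [lra|]. rewrite IHn; ring. Qed.

Lemma rsum_swap n m f :
  rsum n (fun i => rsum m (fun j => f i j)) = rsum m (fun j => rsum n (fun i => f i j)).
Proof. induction n; simpl; [now rewrite rsum_zero|]. now rewrite IHn, <- rsum_add. Qed.

Lemma rsum_delta n p a :
  (p < n)%nat -> rsum n (fun k => if Nat.eqb k p then a else 0) = a.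
Proof.
  induction n as [|n IH]; simpl; intros Hp; [lia|].
  destruct (Nat.eqb_spec n p) as [->|Hnp].
  - rewrite (rsum_ext _ _ (fun _ => 0)), rsum_zero; [lra|].
    intros i Hi; destruct (Nat.eqb_spec i p); [lia|reflexivity].
  - rewrite IH by lia; lra.
Qed.

Lemma rsum_ge0 n f : (forall i, (i < n)%nat -> 0 <= f i) -> 0 <= rsum n f.
Proof.
  induction n as [|n IH]; simpl; intros Hf; [lra|].
  assert (0 <= rsum n f) by (apply IH; intros; apply Hf; lia).
  specialize (Hf n ltac:(lia)); lra.
Qed.

Lemma rsum_ge_term n f i :
  (forall k, (k < n)%nat -> 0 <= f k) -> (i < n)%nat -> f i <= rsum n f.
Proof.
  induction n as [|n IH]; simpl; intros Hf Hi; [lia|].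
  assert (Hn : 0 <= rsum n f) by (apply rsum_ge0; intros; apply Hf; lia).
  destruct (Nat.eq_dec i n) as [->|Hin]; [lra|].
  assert (f i <= rsum n f) by (apply IH; [intros; apply Hf|]; lia).
  specialize (Hf n ltac:(lia)); lra.
Qed.

Lemma rsum_ge_two_terms n f i j :
  (forall k, (k < n)%nat -> 0 <= f k) -> (i < n)%nat -> (j < n)%nat -> i <> j ->
  f i + f j <= rsum n f.
Proof.
  induction n as [|n IH]; simpl; intros Hf Hi Hj Hij; [lia|].
  assert (Hf' : forall k, (k < n)%nat -> 0 <= f k) by (intros; apply Hf; lia).
  destruct (Nat.eq_dec i n) as [->|Hin].
  { assert (f j <= rsum n f) by (apply rsum_ge_term; auto; lia). lra. }
  destruct (Nat.eq_dec j n) as [->|Hjn].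
  { assert (f i <= rsum n f) by (apply rsum_ge_term; auto; lia). lra. }
  assert (f i + f j <= rsum n f) by (apply IH; auto; lia).
  specialize (Hf n ltac:(lia)); lra.
Qed.

Lemma rsum_eq0_term n f i :
  (forall k, (k < n)%nat -> 0 <= f k) -> rsum n f = 0 -> (i < n)%nat -> f i = 0.
Proof.
  intros Hf Hsum Hi.
  assert (f i <= rsum n f) by (apply rsum_ge_term; auto).
  specialize (Hf i Hi); lra.
Qed.

Lemma rminn_le f m i : (i <= m)%nat -> rminn f m <= f i.
Proof.
  induction m as [|m IH]; simpl; intros Hi.
  - replace i with 0%nat by lia; lra.
  - destruct (Nat.eq_dec i (S m)) as [->|Him]; [apply Rmin_r|].
    eapply Rle_trans; [apply Rmin_l | apply IH; lia].
Qed.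

Lemma rminn_pos f m : (forall i, (i <= m)%nat -> 0 < f i) -> 0 < rminn f m.
Proof.
  induction m as [|m IH]; simpl; intros Hf; [apply Hf; lia|].
  apply Rmin_case; [apply IH; intros; apply Hf | apply Hf]; lia.
Qed.

(** * Linear algebra in [R^n] *)

Definition skip (p k : nat) : nat := if Nat.ltb k p then k else S k.
Definition unskip (p k : nat) : nat := if Nat.ltb k p then k else pred k.

Lemma skip_neq p k : skip p k <> p.
Proof. unfold skip; destruct (Nat.ltb_spec k p); lia. Qed.

Lemma unskipK p k : unskip p (skip p k) = k.
Proof.
  unfold skip, unskip; destruct (Nat.ltb_spec k p);
    [destruct (Nat.ltb_spec k p) | destruct (Nat.ltb_spec (S k) p)]; lia.
Qed.

Lemma skip_lt p k m : (k < m)%nat -> (skip p k < S m)%nat.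
Proof. unfold skip; destruct (Nat.ltb_spec k p); lia. Qed.

Lemma rsum_skip m p g :
  (p < S m)%nat -> rsum (S m) g = rsum m (fun k => g (skip p k)) + g p.
Proof.
  revert p; induction m as [|m IH]; intros p Hp.
  - simpl; replace p with 0%nat by lia; lra.
  - destruct (Nat.eq_dec p (S m)) as [->|Hpm].
    + change (rsum (S m) g + g (S m) = rsum (S m) (fun k => g (skip (S m) k)) + g (S m)).
      f_equal; apply rsum_ext; intros i Hi.
      unfold skip; destruct (Nat.ltb_spec i (S m)); [reflexivity | lia].
    + change (rsum (S m) g + g (S m)
              = rsum m (fun k => g (skip p k)) + g (skip p m) + g p).
      rewrite (IH p) by lia.
      replace (skip p m) with (S m) by (unfold skip; destruct (Nat.ltb_spec m p); lia).
      lra.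
Qed.

(* Induction on the dimension: the last coordinate [n] is eliminated against a vector
   [x p] with [x p n <> 0]. *)
Lemma exists_nontrivial_relation n : forall m (x : nat -> nat -> R), (n < m)%nat ->
  exists c : nat -> R, (exists k, (k < m)%nat /\ c k <> 0) /\
    forall i, (i < n)%nat -> rsum m (fun k => c k * x k i) = 0.
Proof.
  induction n as [|n IH]; intros m x Hm.
  { exists (fun _ => 1); split; [exists 0%nat; split; [lia | lra] | intros; lia]. }
  destruct (classic (forall k, (k < m)%nat -> x k n = 0)) as [Hzero|Hpivot].
  - destruct (IH m x ltac:(lia)) as [c [Hc Hrel]].
    exists c; split; [exact Hc|]; intros i Hi.
    destruct (Nat.eq_dec i n) as [->|Hin]; [|apply Hrel; lia].
    rewrite (rsum_ext _ _ (fun _ => 0)); [apply rsum_zero|].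
    intros k Hk; rewrite Hzero by exact Hk; ring.
  - apply not_all_ex_not in Hpivot; destruct Hpivot as [p Hp].
    apply imply_to_and in Hp; destruct Hp as [Hpm Hpiv].
    destruct m as [|m]; [lia|].
    set (y := fun k i => x (skip p k) i - x (skip p k) n / x p n * x p i).
    destruct (IH m y ltac:(lia)) as [d [[k0 [Hk0 Hdk0]] Hrel]].
    set (s := rsum m (fun k => d k * x (skip p k) n)).
    set (c := fun j => if Nat.eqb j p then - s / x p n else d (unskip p j)).
    assert (Hc_skip : forall k, c (skip p k) = d k).
    { intros k; unfold c; destruct (Nat.eqb_spec (skip p k) p) as [E|_].
      - exfalso; exact (skip_neq p k E).
      - now rewrite unskipK. }
    assert (Hc_p : c p = - s / x p n) by (unfold c; now rewrite Nat.eqb_refl).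
    exists c; split.
    + exists (skip p k0); split; [now apply skip_lt | now rewrite Hc_skip].
    + intros i Hi; rewrite (rsum_skip m p) by lia.
      rewrite (rsum_ext _ _ (fun k => d k * x (skip p k) i)) by (intros; now rewrite Hc_skip).
      rewrite Hc_p.
      destruct (Nat.eq_dec i n) as [->|Hin]; [fold s; field; exact Hpiv|].
      specialize (Hrel i ltac:(lia)); unfold y in Hrel.
      rewrite (rsum_ext _ _ (fun k => d k * x (skip p k) i
                                      - d k * x (skip p k) n * (x p i / x p n))) in Hrel
        by (intros; field; exact Hpiv).
      rewrite rsum_sub, rsum_mulr in Hrel; fold s in Hrel.
      replace (rsum m (fun k => d k * x (skip p k) i)) with (s * (x p i / x p n)) by lra.
      field; exact Hpiv.
Qed.

Definition lin_independent (n : nat) (v : nat -> nat -> R) : Prop :=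
  forall c : nat -> R,
    (forall i, (i < n)%nat -> rsum n (fun k => c k * v k i) = 0) ->
    forall k, (k < n)%nat -> c k = 0.

Lemma lin_independent_spans n v : lin_independent n v ->
  forall f : nat -> R, exists c : nat -> R,
    forall i, (i < n)%nat -> f i = rsum n (fun k => c k * v k i).
Proof.
  intros Hind f.
  set (x := fun k i => if Nat.eqb k n then f i else v k i).
  destruct (exists_nontrivial_relation n (S n) x ltac:(lia)) as [c [[k0 [Hk0 Hck0]] Hrel]].
  assert (Hx : forall i, rsum n (fun k => c k * x k i) = rsum n (fun k => c k * v k i)).
  { intros i; apply rsum_ext; intros k Hk; unfold x.
    destruct (Nat.eqb_spec k n); [lia | reflexivity]. }
  assert (Hrel' : forall i, (i < n)%nat -> rsum n (fun k => c k * v k i) + c n * f i = 0).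
  { intros i Hi; specialize (Hrel i Hi); simpl in Hrel.
    now rewrite Hx in Hrel; unfold x in Hrel; rewrite Nat.eqb_refl in Hrel. }
  destruct (Req_dec (c n) 0) as [Hcn|Hcn].
  - exfalso; apply Hck0.
    destruct (Nat.eq_dec k0 n) as [->|Hk0n]; [exact Hcn|].
    apply (Hind c); [|lia]; intros i Hi.
    specialize (Hrel' i Hi); rewrite Hcn in Hrel'; lra.
  - exists (fun k => - c k / c n); intros i Hi.
    rewrite (rsum_ext _ _ (fun k => c k * v k i * (- / c n))) by (intros; field; exact Hcn).
    rewrite rsum_mulr; specialize (Hrel' i Hi).
    replace (rsum n (fun k => c k * v k i)) with (- (c n * f i)) by lra.
    field; exact Hcn.
Qed.

(** * The Dirichlet form *)

Section DirichletForm.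
Variables (n : nat) (w : nat -> nat -> R) (r : R).
Hypothesis w_sym : forall i j, (i < n)%nat -> (j < n)%nat -> w i j = w j i.

Definition dpow (i : nat) : R := Rpower (deg n w i) r.

(* [lap] is self-adjoint for this inner product. *)
Definition dot (x y : nat -> R) : R := rsum n (fun i => dpow i * x i * y i).

Definition dirichlet (x y : nat -> R) : R :=
  rsum n (fun i => x i * rsum n (fun j => w i j * (y i - y j))).

Lemma dpow_pos i : 0 < dpow i.
Proof. apply exp_pos. Qed.

Lemma dot_ext x x' y y' :
  (forall i, (i < n)%nat -> x i = x' i) -> (forall i, (i < n)%nat -> y i = y' i) ->
  dot x y = dot x' y'.
Proof. intros Hx Hy; apply rsum_ext; intros i Hi; now rewrite Hx, Hy. Qed.

Lemma dotC x y : dot x y = dot y x.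
Proof. apply rsum_ext; intros; ring. Qed.

Lemma dot_ge0 x : 0 <= dot x x.
Proof.
  apply rsum_ge0; intros i _; pose proof (dpow_pos i).
  rewrite Rmult_assoc; apply Rmult_le_pos; [lra | apply Rle_0_sqr].
Qed.

Lemma dot_sq_ge_two_terms m x i j :
  (forall k, (k < n)%nat -> m <= dpow k) -> (i < n)%nat -> (j < n)%nat -> i <> j ->
  m * (x i * x i) + m * (x j * x j) <= dot x x.
Proof.
  intros Hm Hi Hj Hij.
  assert (Hterm : forall k, (k < n)%nat -> m * (x k * x k) <= dpow k * x k * x k).
  { intros k Hk; rewrite Rmult_assoc; apply Rmult_le_compat_r; [apply Rle_0_sqr | auto]. }
  pose proof (Hterm i Hi); pose proof (Hterm j Hj).
  enough (dpow i * x i * x i + dpow j * x j * x j <= dot x x) by lra.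
  apply (rsum_ge_two_terms n (fun k => dpow k * x k * x k)); auto.
  intros k _; rewrite Rmult_assoc; apply Rmult_le_pos; [apply Rlt_le, dpow_pos | apply Rle_0_sqr].
Qed.

Lemma dot_sq_ge_term m x i :
  (forall k, (k < n)%nat -> m <= dpow k) -> (i < n)%nat -> m * (x i * x i) <= dot x x.
Proof.
  intros Hm Hi; apply Rle_trans with (dpow i * x i * x i).
  - rewrite Rmult_assoc; apply Rmult_le_compat_r; [apply Rle_0_sqr | auto].
  - apply (rsum_ge_term n (fun k => dpow k * x k * x k)); [|exact Hi].
    intros k _; rewrite Rmult_assoc; apply Rmult_le_pos; [apply Rlt_le, dpow_pos | apply Rle_0_sqr].
Qed.

Lemma dot_suml m (a : nat -> R) (x : nat -> nat -> R) y :
  dot (fun i => rsum m (fun k => a k * x k i)) y = rsum m (fun k => a k * dot (x k) y).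
Proof.
  unfold dot; rewrite (rsum_ext _ _ (fun i => rsum m (fun k => a k * (dpow i * x k i * y i)))).
  - rewrite rsum_swap; apply rsum_ext; intros; apply rsum_mull.
  - intros i Hi; rewrite <- rsum_mull, <- rsum_mulr; apply rsum_ext; intros; ring.
Qed.

Lemma dot_sum m (a b : nat -> R) (x y : nat -> nat -> R) :
  dot (fun i => rsum m (fun k => a k * x k i)) (fun i => rsum m (fun l => b l * y l i))
  = rsum m (fun k => rsum m (fun l => a k * b l * dot (x k) (y l))).
Proof.
  rewrite dot_suml; apply rsum_ext; intros k Hk.
  rewrite dotC, dot_suml, <- rsum_mull; apply rsum_ext; intros; rewrite dotC; ring.
Qed.

Lemma dot_lap x y : dot x (lap n w r y) = dirichlet x y.
Proof.
  apply rsum_ext; intros i Hi; unfold lap; pose proof (dpow_pos i); unfold dpow in *.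
  field; lra.
Qed.

Lemma lap_ext x x' i :
  (forall j, (j < n)%nat -> x j = x' j) -> (i < n)%nat -> lap n w r x i = lap n w r x' i.
Proof.
  intros Hx Hi; unfold lap; f_equal; apply rsum_ext; intros j Hj; now rewrite !Hx.
Qed.

Lemma lap_sum m (c : nat -> R) (x : nat -> nat -> R) i :
  lap n w r (fun j => rsum m (fun k => c k * x k j)) i
  = rsum m (fun k => c k * lap n w r (x k) i).
Proof.
  unfold lap.
  rewrite (rsum_ext _ (fun k => c k * (/ Rpower (deg n w i) r
                                   * rsum n (fun j => w i j * (x k i - x k j))))
                     (fun k => / Rpower (deg n w i) r
                                  * (c k * rsum n (fun j => w i j * (x k i - x k j)))))
    by (intros; ring).
  rewrite rsum_mull; f_equal.
  rewrite (rsum_ext _ _ (fun j => rsum m (fun k => c k * (w i j * (x k i - x k j))))).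
  - rewrite rsum_swap; apply rsum_ext; intros; apply rsum_mull.
  - intros j Hj; rewrite <- rsum_sub, <- rsum_mull; apply rsum_ext; intros; ring.
Qed.

Lemma lap_const a i : lap n w r (fun _ => a) i = 0.
Proof.
  unfold lap; rewrite (rsum_ext _ _ (fun _ => 0)); [rewrite rsum_zero; ring | intros; ring].
Qed.

Lemma dirichlet_sym_sum x y :
  dirichlet x y = / 2 * rsum n (fun i => rsum n (fun j => w i j * (x i - x j) * (y i - y j))).
Proof.
  assert (H1 : dirichlet x y = rsum n (fun i => rsum n (fun j => w i j * x i * (y i - y j)))).
  { apply rsum_ext; intros i Hi; rewrite <- rsum_mull; apply rsum_ext; intros; ring. }
  assert (H2 : dirichlet x y = rsum n (fun i => rsum n (fun j => w i j * x j * (y j - y i)))).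
  { rewrite H1, rsum_swap; apply rsum_ext; intros i Hi; apply rsum_ext; intros j Hj.
    rewrite w_sym by assumption; ring. }
  rewrite (rsum_ext _ _ (fun i => rsum n (fun j => w i j * x i * (y i - y j))
                                  + rsum n (fun j => w i j * x j * (y j - y i)))).
  - rewrite rsum_add, <- H1, <- H2; lra.
  - intros i Hi; rewrite <- rsum_add; apply rsum_ext; intros; ring.
Qed.

Lemma dirichletC x y : dirichlet x y = dirichlet y x.
Proof.
  rewrite !dirichlet_sym_sum; f_equal; apply rsum_ext; intros; apply rsum_ext; intros; ring.
Qed.

Lemma dirichlet_subr_const x y a : dirichlet x (fun i => y i - a) = dirichlet x y.
Proof.
  rewrite !dirichlet_sym_sum; f_equal; apply rsum_ext; intros; apply rsum_ext; intros; ring.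
Qed.

Lemma dirichlet_const_l a y : dirichlet (fun _ => a) y = 0.
Proof.
  rewrite dirichlet_sym_sum, (rsum_ext _ _ (fun _ => 0)), rsum_zero; [ring|].
  intros; rewrite (rsum_ext _ _ (fun _ => 0)); [apply rsum_zero | intros; ring].
Qed.

Hypothesis w_ge0 : forall i j, (i < n)%nat -> (j < n)%nat -> 0 <= w i j.

Lemma dirichlet_ge0 x : 0 <= dirichlet x x.
Proof.
  rewrite dirichlet_sym_sum; apply Rmult_le_pos; [lra|].
  apply rsum_ge0; intros i Hi; apply rsum_ge0; intros j Hj.
  rewrite Rmult_assoc; apply Rmult_le_pos; [apply w_ge0; assumption | apply Rle_0_sqr].
Qed.

Lemma dirichlet_eq0_const x : connected n w -> dirichlet x x = 0 ->
  forall j, (j < n)%nat -> x j = x 0%nat.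
Proof.
  intros Hconn Hx0.
  assert (Hterm : forall i j, (i < n)%nat -> (j < n)%nat -> w i j * (x i - x j) * (x i - x j) = 0).
  { assert (Hnn : forall i j, (i < n)%nat -> (j < n)%nat -> 0 <= w i j * (x i - x j) * (x i - x j)).
    { intros i j Hi Hj; rewrite Rmult_assoc; apply Rmult_le_pos; [auto | apply Rle_0_sqr]. }
    intros i j Hi Hj.
    apply (rsum_eq0_term n (fun j => w i j * (x i - x j) * (x i - x j))); auto.
    apply (rsum_eq0_term n (fun i => rsum n (fun j => w i j * (x i - x j) * (x i - x j)))); auto.
    - intros; apply rsum_ge0; auto.
    - rewrite dirichlet_sym_sum in Hx0; lra. }
  assert (Hreach : forall j, reach n w 0 j -> (0 < n)%nat -> (j < n)%nat /\ x j = x 0%nat).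
  { induction 1 as [|j k _ IH Hk Hjk]; intros Hn; [split; auto|].
    destruct (IH Hn) as [Hj Hxj]; split; [exact Hk|].
    specialize (Hterm j k Hj Hk); rewrite Rmult_assoc in Hterm.
    apply Rmult_integral in Hterm; destruct Hterm as [E|E]; [lra|].
    assert (x j - x k = 0) by nra; lra. }
  intros j Hj; apply Hreach; [apply Hconn|]; lia.
Qed.

End DirichletForm.

(** * Spectral bounds *)

Section Spectrum.
Variables (n : nat) (w : nat -> nat -> R) (r : R) (lam : nat -> R) (v : nat -> nat -> R).
Hypothesis w_sym : forall i j, (i < n)%nat -> (j < n)%nat -> w i j = w j i.
Hypothesis w_ge0 : forall i j, (i < n)%nat -> (j < n)%nat -> 0 <= w i j.
Hypothesis v_eig : forall k i, (k < n)%nat -> (i < n)%nat -> lap n w r (v k) i = lam k * v k i.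
Hypothesis v_indep : lin_independent n v.

Lemma dirichlet_eigvec k l : (l < n)%nat ->
  dirichlet n w (v k) (v l) = lam l * dot n w r (v k) (v l).
Proof.
  intros Hl; rewrite <- (dot_lap n w r); unfold dot; rewrite <- rsum_mull.
  apply rsum_ext; intros i Hi; rewrite v_eig by assumption; ring.
Qed.

Lemma dot_eigvec_orth k l : (k < n)%nat -> (l < n)%nat -> lam k <> lam l ->
  dot n w r (v k) (v l) = 0.
Proof.
  intros Hk Hl Hkl.
  assert (lam l * dot n w r (v k) (v l) = lam k * dot n w r (v k) (v l)).
  { rewrite <- dirichlet_eigvec, dirichletC, dirichlet_eigvec, dotC by assumption.
    reflexivity. }
  apply (Rmult_eq_reg_l (lam k - lam l)); [lra|]; intro; lra.
Qed.

Lemma eigvec_nonzero k : (k < n)%nat -> exists i, (i < n)%nat /\ v k i <> 0.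
Proof.
  intros Hk; apply NNPP; intros Hzero.
  assert (H1 : (if Nat.eqb k k then 1 else 0) = 0).
  { apply (v_indep (fun j => if Nat.eqb j k then 1 else 0)); [|exact Hk]; intros i Hi.
    rewrite (rsum_ext _ _ (fun j => if Nat.eqb j k then v k i else 0)).
    - rewrite rsum_delta by exact Hk; apply NNPP; intros Hv; apply Hzero; now exists i.
    - intros j Hj; destruct (Nat.eqb_spec j k) as [->|]; ring. }
  rewrite Nat.eqb_refl in H1; lra.
Qed.

Lemma dot_eigvec_pos k : (k < n)%nat -> 0 < dot n w r (v k) (v k).
Proof.
  intros Hk; destruct (eigvec_nonzero k Hk) as [i [Hi Hv]].
  apply Rlt_le_trans with (dpow n w r i * v k i * v k i).
  - rewrite Rmult_assoc; apply Rmult_lt_0_compat; [apply dpow_pos | now apply Rsqr_pos_lt].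
  - apply (rsum_ge_term n (fun i => dpow n w r i * v k i * v k i)); [|exact Hi].
    intros j _; rewrite Rmult_assoc; apply Rmult_le_pos; [apply Rlt_le, dpow_pos | apply Rle_0_sqr].
Qed.

Lemma eig_ge0 k : (k < n)%nat -> 0 <= lam k.
Proof.
  intros Hk; pose proof (dot_eigvec_pos k Hk).
  pose proof (dirichlet_ge0 n w w_sym w_ge0 (v k)).
  rewrite dirichlet_eigvec in * by exact Hk; nra.
Qed.

(* Writing [f = sum_k c_k v_k], [B(f,f) - mu <f,f>] is the squared norm of
   [sum_k c_k sqrt(lam_k - mu) v_k], since eigenvectors of distinct eigenvalues are orthogonal. *)
Lemma dirichlet_ge_of_spectral_support (c : nat -> R) mu f :
  (forall k, (k < n)%nat -> c k <> 0 -> mu <= lam k) ->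
  (forall i, (i < n)%nat -> f i = rsum n (fun k => c k * v k i)) ->
  mu * dot n w r f f <= dirichlet n w f f.
Proof.
  intros Hsupp Hf.
  assert (HB : dirichlet n w f f
               = rsum n (fun k => rsum n (fun l => c k * (c l * lam l) * dot n w r (v k) (v l)))).
  { rewrite <- (dot_lap n w r), <- dot_sum; apply dot_ext; [exact Hf|]; intros i Hi.
    rewrite (lap_ext n w r _ _ _ Hf Hi), lap_sum; apply rsum_ext; intros k Hk.
    rewrite v_eig by assumption; ring. }
  assert (HE : dot n w r f f
               = rsum n (fun k => rsum n (fun l => c k * c l * dot n w r (v k) (v l)))).
  { rewrite <- dot_sum; apply dot_ext; exact Hf. }
  set (s := fun k => sqrt (lam k - mu)).
  pose proof (dot_ge0 n w r (fun i => rsum n (fun k => (c k * s k) * v k i))) as Hsq.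
  rewrite dot_sum in Hsq.
  enough (dirichlet n w f f - mu * dot n w r f f
          = rsum n (fun k => rsum n (fun l => c k * s k * (c l * s l) * dot n w r (v k) (v l))))
    by lra.
  rewrite HB, HE, <- rsum_mull, <- rsum_sub; apply rsum_ext; intros k Hk.
  rewrite <- rsum_mull, <- rsum_sub; apply rsum_ext; intros l Hl.
  destruct (Req_dec (c k) 0) as [->|Hck]; [ring|].
  destruct (Req_dec (c l) 0) as [->|Hcl]; [ring|].
  destruct (Req_dec (lam k) (lam l)) as [Hkl|Hkl].
  - unfold s; rewrite <- Hkl.
    replace (c k * sqrt (lam k - mu) * (c l * sqrt (lam k - mu)) * dot n w r (v k) (v l))
      with (c k * c l * dot n w r (v k) (v l) * (sqrt (lam k - mu) * sqrt (lam k - mu))) by ring.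
    rewrite sqrt_sqrt by (pose proof (Hsupp k Hk Hck); lra); ring.
  - rewrite dot_eigvec_orth by assumption; ring.
Qed.

Hypothesis lam_sorted : forall k, (S k < n)%nat -> lam k <= lam (S k).

Lemma eig1_le k : (1 <= k)%nat -> (k < n)%nat -> lam 1%nat <= lam k.
Proof.
  induction k as [|k IH]; intros H1 Hk; [lia|].
  destruct (Nat.eq_dec k 0) as [->|Hk0]; [lra|].
  specialize (IH ltac:(lia) ltac:(lia)); specialize (lam_sorted k Hk); lra.
Qed.

(* Expanding [1] in the eigenbasis: [lap 1 = 0] while [lam k > 0] for [k >= 1]. *)
Lemma const_eigvec0 : (1 < n)%nat -> lam 0%nat < lam 1%nat ->
  exists e, forall i, (i < n)%nat -> 1 = e * v 0%nat i.
Proof.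
  intros Hn H01.
  destruct (lin_independent_spans n v v_indep (fun _ => 1)) as [e He].
  assert (Helam : forall k, (k < n)%nat -> e k * lam k = 0).
  { apply v_indep; intros i Hi.
    rewrite (rsum_ext _ _ (fun k => e k * lap n w r (v k) i))
      by (intros; rewrite v_eig by assumption; ring).
    rewrite <- lap_sum, (lap_ext n w r _ (fun _ => 1)); [apply lap_const | | exact Hi].
    intros j Hj; symmetry; auto. }
  assert (He0 : forall k, (1 <= k)%nat -> (k < n)%nat -> e k = 0).
  { intros k H1 Hk; pose proof (eig1_le k H1 Hk); pose proof (eig_ge0 0 ltac:(lia)).
    specialize (Helam k Hk); apply (Rmult_eq_reg_r (lam k)); lra. }
  exists (e 0%nat); intros i Hi; rewrite (He i Hi).
  rewrite (rsum_ext _ _ (fun k => if Nat.eqb k 0 then e 0%nat * v 0%nat i else 0)).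
  - apply rsum_delta; lia.
  - intros k Hk; destruct (Nat.eqb_spec k 0) as [->|]; [reflexivity|].
    rewrite He0 by lia; ring.
Qed.

Lemma poincare : (1 < n)%nat -> forall f, dot n w r f (fun _ => 1) = 0 ->
  lam 1%nat * dot n w r f f <= dirichlet n w f f.
Proof.
  intros Hn f Hf1.
  destruct (lin_independent_spans n v v_indep f) as [c Hc].
  apply (dirichlet_ge_of_spectral_support c); [|exact Hc].
  intros k Hk Hck; destruct k as [|k]; [|apply eig1_le; lia].
  destruct (Rlt_dec (lam 0%nat) (lam 1%nat)) as [H01|H01]; [exfalso|lra].
  destruct (const_eigvec0 Hn H01) as [e He].
  assert (Hfv0 : dot n w r f (v 0%nat) = c 0%nat * dot n w r (v 0%nat) (v 0%nat)).
  { rewrite (dot_ext n w r f _ _ _ Hc (fun _ _ => eq_refl)), dot_suml.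
    rewrite (rsum_ext _ _ (fun k => if Nat.eqb k 0
                                    then c 0%nat * dot n w r (v 0%nat) (v 0%nat) else 0)).
    - apply rsum_delta; lia.
    - intros k Hk'; destruct (Nat.eqb_spec k 0) as [->|Hk0]; [reflexivity|].
      rewrite dot_eigvec_orth; [ring | exact Hk' | lia |].
      pose proof (eig1_le k ltac:(lia) Hk'); lra. }
  assert (Hf1' : dot n w r f (fun _ => 1) = e * dot n w r f (v 0%nat)).
  { rewrite (dot_ext n w r f f _ (fun i => e * v 0%nat i)) by auto.
    unfold dot; rewrite <- rsum_mull; apply rsum_ext; intros; ring. }
  pose proof (dot_eigvec_pos 0 ltac:(lia)).
  assert (e <> 0) by (intros ->; specialize (He 0%nat ltac:(lia)); lra).
  rewrite Hf1', Hfv0 in Hf1; apply Hck.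
  apply (Rmult_eq_reg_l (e * dot n w r (v 0%nat) (v 0%nat))); [lra|].
  apply Rmult_integral_contrapositive_currified; lra.
Qed.

(* Otherwise [v 0] and [v 1] lie in the kernel of [lap], hence are constant by
   connectivity, contradicting their independence. *)
Lemma eig1_pos : (1 < n)%nat -> connected n w -> 0 < lam 1%nat.
Proof.
  intros Hn Hconn; destruct (Rlt_dec 0 (lam 1%nat)) as [|Hle]; [assumption|exfalso].
  pose proof (eig_ge0 0 ltac:(lia)); pose proof (eig_ge0 1 ltac:(lia)).
  pose proof (lam_sorted 0 Hn).
  assert (Hconst : forall k, (k < 2)%nat -> forall j, (j < n)%nat -> v k j = v k 0%nat).
  { intros k Hk; apply (dirichlet_eq0_const n w w_sym w_ge0 _ Hconn).
    rewrite dirichlet_eigvec by lia.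
    replace (lam k) with 0 by (destruct k as [|[|]]; lia || lra); ring. }
  destruct (eigvec_nonzero 0 ltac:(lia)) as [i0 [Hi0 Hv0]].
  rewrite (Hconst 0%nat ltac:(lia) i0 Hi0) in Hv0; apply Hv0.
  set (c := fun k => if Nat.eqb k 0 then v 1%nat 0%nat
                     else if Nat.eqb k 1 then - v 0%nat 0%nat else 0).
  enough (c 1%nat = 0) by (unfold c in *; simpl in *; lra).
  apply v_indep; [|exact Hn]; intros i Hi.
  rewrite (rsum_ext _ _ (fun k => (if Nat.eqb k 0 then v 1%nat 0%nat * v 0%nat i else 0)
                                  + (if Nat.eqb k 1 then - v 0%nat 0%nat * v 1%nat i else 0))).
  - rewrite rsum_add, !rsum_delta by lia.
    rewrite (Hconst 0%nat ltac:(lia) i Hi), (Hconst 1%nat ltac:(lia) i Hi); ring.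
  - intros k Hk; unfold c.
    destruct k as [|[|k]]; simpl; ring.
Qed.

End Spectrum.

(** * Heat flow *)

Lemma derive_nonpos_le (h h' : R -> R) a b :
  (forall s, a <= s <= b -> derivable_pt_lim h s (h' s)) ->
  (forall s, a <= s <= b -> h' s <= 0) -> a <= b -> h b <= h a.
Proof.
  intros Hd Hneg Hab; destruct (Rle_lt_or_eq_dec a b Hab) as [Hlt| ->]; [|lra].
  destruct (MVT_cor2 h h' a b Hlt Hd) as [c [Hmvt Hc]].
  pose proof (Hneg c ltac:(lra)); nra.
Qed.

Lemma derivable_pt_lim_rsum n (g : nat -> R -> R) (g' : nat -> R) t :
  (forall i, (i < n)%nat -> derivable_pt_lim (g i) t (g' i)) ->
  derivable_pt_lim (fun s => rsum n (fun i => g i s)) t (rsum n g').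
Proof.
  induction n as [|n IH]; intros Hg; simpl.
  - apply derivable_pt_lim_const.
  - apply (derivable_pt_lim_plus (fun s => rsum n (fun i => g i s)) (g n));
      [apply IH; intros i Hi|]; apply Hg; lia.
Qed.

Lemma derivable_pt_lim_exp_scal k t :
  derivable_pt_lim (fun s => exp (k * s)) t (k * exp (k * t)).
Proof.
  rewrite Rmult_comm; apply (derivable_pt_lim_comp (fun s => k * s) exp).
  - pose proof (derivable_pt_lim_scal id k t 1 (derivable_pt_lim_id t)) as Hlin.
    rewrite Rmult_1_r in Hlin; exact Hlin.
  - apply derivable_pt_lim_exp.
Qed.

Lemma derivable_pt_lim_mull f a t l :
  derivable_pt_lim f t l -> derivable_pt_lim (fun s => a * f s) t (a * l).
Proof. exact (derivable_pt_lim_scal f a t l). Qed.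

Lemma derivable_pt_lim_mulr f a t l :
  derivable_pt_lim f t l -> derivable_pt_lim (fun s => f s * a) t (l * a).
Proof.
  intros Hf.
  pose proof (derivable_pt_lim_mult f (fct_cte a) t l 0 Hf (derivable_pt_lim_const a t)) as H.
  unfold mult_fct, fct_cte in H; rewrite Rmult_0_r, Rplus_0_r in H; exact H.
Qed.

Lemma derivable_pt_lim_weighted_sqr a c f t l : derivable_pt_lim f t l ->
  derivable_pt_lim (fun s => a * (f s - c) * (f s - c)) t (2 * (a * (f t - c) * l)).
Proof.
  intros Hf.
  assert (Hsub : derivable_pt_lim (fun s => f s - c) t l).
  { pose proof (derivable_pt_lim_minus f (fct_cte c) t l 0 Hf (derivable_pt_lim_const c t)) as H.
    rewrite Rminus_0_r in H; exact H. }
  pose proof (derivable_pt_lim_mult (fun s => a * (f s - c)) (fun s => f s - c) t (a * l) l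
                (derivable_pt_lim_mull _ a t l Hsub) Hsub) as H.
  unfold mult_fct in H.
  replace (2 * (a * (f t - c) * l)) with (a * l * (f t - c) + a * (f t - c) * l) by ring.
  exact H.
Qed.

Section HeatFlow.
Variables (n : nat) (w : nat -> nat -> R) (r : R) (u0 : nat -> R) (u : R -> nat -> R).
Hypothesis w_sym : forall i j, (i < n)%nat -> (j < n)%nat -> w i j = w j i.
Hypothesis u_heat : heat_solution n w r u0 u.

Notation one := (fun _ : nat => 1).

Lemma heat_dot_derive y t :
  derivable_pt_lim (fun s => dot n w r (u s) y) t (- dot n w r (lap n w r (u t)) y).
Proof.
  replace (- dot n w r (lap n w r (u t)) y)
    with (rsum n (fun i => dpow n w r i * - lap n w r (u t) i * y i))
    by (unfold dot; rewrite <- rsum_opp; apply rsum_ext; intros; ring).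
  apply (derivable_pt_lim_rsum n (fun i s => dpow n w r i * u s i * y i)); intros i Hi.
  apply derivable_pt_lim_mulr, derivable_pt_lim_mull, (proj2 u_heat), Hi.
Qed.

(* [d/dt <u, 1> = - <1, lap u> = - B(1, u) = 0]. *)
Lemma heat_mass_conserved t : 0 <= t -> dot n w r (u t) one = dot n w r u0 one.
Proof.
  intros Ht.
  assert (Hd : forall s, derivable_pt_lim (fun s => dot n w r (u s) one) s 0).
  { intros s; replace 0 with (- dot n w r (lap n w r (u s)) one); [apply heat_dot_derive|].
    rewrite dotC, dot_lap, (dirichlet_const_l n w w_sym); ring. }
  assert (Hd' : forall s, derivable_pt_lim (fun s => - dot n w r (u s) one) s (- 0))
    by (intros s; apply (derivable_pt_lim_opp (fun s => dot n w r (u s) one)), Hd).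
  rewrite (dot_ext n w r u0 (u 0) one one) by (intros; auto; symmetry; now apply (proj1 u_heat)).
  pose proof (derive_nonpos_le _ _ 0 t (fun s _ => Hd s) (fun _ _ => Rle_refl 0) Ht).
  pose proof (derive_nonpos_le _ _ 0 t (fun s _ => Hd' s) (fun _ _ => Req_le _ _ Ropp_0) Ht).
  simpl in *; lra.
Qed.

Lemma heat_energy_derive c t :
  derivable_pt_lim (fun s => dot n w r (fun i => u s i - c) (fun i => u s i - c)) t
    (-2 * dirichlet n w (fun i => u t i - c) (fun i => u t i - c)).
Proof.
  replace (-2 * dirichlet n w (fun i => u t i - c) (fun i => u t i - c))
    with (rsum n (fun i => 2 * (dpow n w r i * (u t i - c) * - lap n w r (u t) i))).
  - apply (derivable_pt_lim_rsum n (fun i s => dpow n w r i * (u s i - c) * (u s i - c)));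
      intros i Hi.
    apply derivable_pt_lim_weighted_sqr, (proj2 u_heat), Hi.
  - rewrite (dirichlet_subr_const n w w_sym), <- (dot_lap n w r).
    unfold dot; rewrite <- rsum_mull; apply rsum_ext; intros; ring.
Qed.

(* [u t - c] has mean zero, so [E' = -2 B <= -2 mu E] and [E(t) exp (2 mu t)] is
   nonincreasing. *)
Lemma heat_energy_decay c mu t :
  dot n w r u0 one = c * dot n w r one one ->
  (forall f, dot n w r f one = 0 -> mu * dot n w r f f <= dirichlet n w f f) ->
  0 <= t ->
  dot n w r (fun i => u t i - c) (fun i => u t i - c) * exp (2 * mu * t)
  <= dot n w r (fun i => u 0 i - c) (fun i => u 0 i - c).
Proof.
  intros Hmean Hpoinc Ht.
  set (E := fun s => dot n w r (fun i => u s i - c) (fun i => u s i - c)).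
  set (B := fun s => dirichlet n w (fun i => u s i - c) (fun i => u s i - c)).
  assert (HEB : forall s, 0 <= s -> mu * E s <= B s).
  { intros s Hs; apply Hpoinc.
    unfold dot.
    rewrite (rsum_ext _ _ (fun i => dpow n w r i * u s i * 1 - c * (dpow n w r i * 1 * 1)))
      by (intros; ring).
    rewrite rsum_sub, rsum_mull; fold (dot n w r (u s) one) (dot n w r one one).
    rewrite heat_mass_conserved, Hmean by exact Hs; ring. }
  change (E t * exp (2 * mu * t) <= E 0).
  replace (E 0) with (E 0 * exp (2 * mu * 0)) by (rewrite Rmult_0_r, exp_0; ring).
  apply (derive_nonpos_le (fun s => E s * exp (2 * mu * s))
           (fun s => -2 * B s * exp (2 * mu * s) + E s * (2 * mu * exp (2 * mu * s))));
    [| |exact Ht].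
  - intros s _.
    exact (derivable_pt_lim_mult E (fun s => exp (2 * mu * s)) s _ _
             (heat_energy_derive c s) (derivable_pt_lim_exp_scal (2 * mu) s)).
  - intros s [Hs _]; pose proof (HEB s Hs); pose proof (exp_pos (2 * mu * s)).
    replace (-2 * B s * exp (2 * mu * s) + E s * (2 * mu * exp (2 * mu * s)))
      with (- 2 * (B s - mu * E s) * exp (2 * mu * s)) by ring.
    assert (0 <= (B s - mu * E s) * exp (2 * mu * s)) by (apply Rmult_le_pos; lra).
    lra.
Qed.

End HeatFlow.

(** * The threshold time *)

Lemma decay_below_threshold lam A c E0 Et tau :
  0 < lam -> 0 < A -> 0 < c -> c < E0 -> E0 = A * A * c ->
  tau > / lam * ln A ->
  (0 <= tau -> Et * exp (2 * lam * tau) <= E0) ->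
  Et < c.
Proof.
  intros Hlam HA Hc HcE HE0 Htau Hdecay.
  assert (HA1 : 1 < A).
  { assert (1 < A * A) by (apply (Rmult_lt_reg_r c); lra). nra. }
  assert (Hln : 0 < ln A) by (rewrite <- ln_1; apply ln_increasing; lra).
  assert (Hlt : ln A < lam * tau).
  { replace (ln A) with (lam * (/ lam * ln A)) by (field; lra).
    apply Rmult_lt_compat_l; lra. }
  assert (Htau0 : 0 <= tau).
  { assert (0 < / lam * ln A) by (apply Rmult_lt_0_compat; [apply Rinv_0_lt_compat|]; lra).
    lra. }
  assert (HAexp : A < exp (lam * tau)) by (rewrite <- (exp_ln A) by lra; now apply exp_increasing).
  assert (Hexp : A * A < exp (2 * lam * tau)).
  { replace (2 * lam * tau) with (lam * tau + lam * tau) by ring; rewrite exp_plus; nra. }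
  specialize (Hdecay Htau0); pose proof (exp_pos (2 * lam * tau)).
  assert (Et * exp (2 * lam * tau) < c * exp (2 * lam * tau)) by nra.
  nra.
Qed.

Lemma threshold_ratio_sq a b V d q :
  0 < a -> 0 < b -> 0 < V -> d <> 0 -> 0 < q ->
  let A := sqrt a * sqrt b / (sqrt V * Rabs d * q) in
  0 < A /\ a * b / V = A * A * (d * d * (q * q)).
Proof.
  intros Ha Hb HV Hd Hq A.
  pose proof (sqrt_lt_R0 a Ha); pose proof (sqrt_lt_R0 b Hb); pose proof (sqrt_lt_R0 V HV).
  pose proof (Rabs_pos_lt d Hd).
  split.
  - apply Rdiv_lt_0_compat; [nra|]; repeat apply Rmult_lt_0_compat; assumption.
  - assert (Hdd : d * d = Rabs d * Rabs d)
      by (rewrite <- Rabs_mult; symmetry; apply Rabs_pos_eq, Rle_0_sqr).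
    replace (A * A * (d * d * (q * q)))
      with ((sqrt a * sqrt a) * (sqrt b * sqrt b) / (sqrt V * sqrt V))
      by (unfold A; rewrite Hdd; field; lra).
    rewrite !sqrt_sqrt by lra; reflexivity.
Qed.

Section Volumes.
Variables (n : nat) (w : nat -> nat -> R) (r : R) (S : nat -> bool).

Notation one := (fun _ : nat => 1).

Lemma vol_dot : vol n w r S = dot n w r (chi S) one.
Proof. apply rsum_ext; intros; unfold dpow; ring. Qed.

Lemma vol_fullset : vol n w r fullset = dot n w r one one.
Proof. apply rsum_ext; intros; unfold dpow, chi, fullset; ring. Qed.

Lemma vol_complement : vol n w r (complement S) = vol n w r fullset - vol n w r S.
Proof.
  unfold vol; rewrite <- rsum_sub; apply rsum_ext; intros.
  unfold chi, complement, fullset; destruct (S i); simpl; ring.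
Qed.

Lemma vol_pos i : (i < n)%nat -> S i = true -> 0 < vol n w r S.
Proof.
  intros Hi HSi; rewrite vol_dot.
  apply Rlt_le_trans with (dpow n w r i * chi S i * 1).
  - unfold chi; rewrite HSi, !Rmult_1_r; apply dpow_pos.
  - apply (rsum_ge_term n (fun i => dpow n w r i * chi S i * 1)); [|exact Hi].
    intros k _; pose proof (dpow_pos n w r k); unfold chi; destruct (S k); lra.
Qed.

Lemma dot_chi_sub_mean : 0 < vol n w r fullset ->
  dot n w r (fun i => chi S i - vol n w r S / vol n w r fullset)
      (fun i => chi S i - vol n w r S / vol n w r fullset)
  = vol n w r S * vol n w r (complement S) / vol n w r fullset.
Proof.
  intros HV; rewrite vol_complement, vol_dot, vol_fullset in *.
  set (R0 := dot n w r (chi S) one / dot n w r one one).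
  unfold dot at 1.
  rewrite (rsum_ext _ _ (fun i => (dpow n w r i * chi S i * 1) * (1 - 2 * R0)
                                  + R0 * R0 * (dpow n w r i * 1 * 1))).
  - rewrite rsum_add, rsum_mulr, rsum_mull; fold (dot n w r (chi S) one) (dot n w r one one).
    unfold R0; field; lra.
  - intros i _; unfold chi; destruct (S i); ring.
Qed.

Lemma dot_chi_sub_gt m c i0 i1 :
  (forall k, (k < n)%nat -> m <= dpow n w r k) -> 0 < m ->
  (i0 < n)%nat -> (i1 < n)%nat -> S i0 = true -> S i1 = false ->
  (c - 1/2) * (c - 1/2) * m < dot n w r (fun i => chi S i - c) (fun i => chi S i - c).
Proof.
  intros Hm Hm0 Hi0 Hi1 HS0 HS1.
  assert (Hi01 : i0 <> i1) by congruence.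
  pose proof (dot_sq_ge_two_terms n w r m (fun i => chi S i - c) i0 i1 Hm Hi0 Hi1 Hi01) as H2.
  cbv beta in H2.
  replace (chi S i0) with 1 in H2 by (unfold chi; now rewrite HS0).
  replace (chi S i1) with 0 in H2 by (unfold chi; now rewrite HS1).
  assert (0 < m * (c * c - c + 3/4)) by (apply Rmult_lt_0_compat; nra).
  nra.
Qed.

Lemma dmin_pos : (forall i, (i < n)%nat -> 0 < deg n w i) -> (0 < n)%nat -> 0 < dmin n w.
Proof. intros Hdeg Hn; apply rminn_pos; intros; apply Hdeg; lia. Qed.

Lemma dpow_ge_dmin i : 0 <= r -> (forall i, (i < n)%nat -> 0 < deg n w i) -> (i < n)%nat ->
  Rpower (dmin n w) r <= dpow n w r i.
Proof.
  intros Hr Hdeg Hi; apply Rle_Rpower_l; [exact Hr|]; split.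
  - apply dmin_pos; [exact Hdeg | lia].
  - apply rminn_le; lia.
Qed.

End Volumes.

Theorem mainTheorem11
  (n : nat) (w : nat -> nat -> R) (r : R)
  (Hr : 0 <= r <= 1)
  (Hw : weighted_graph n w)
  (Hconn : connected n w)
  (S : nat -> bool)
  (HSne : exists i, (i < n)%nat /\ S i = true)
  (HSnV : exists i, (i < n)%nat /\ S i = false)
  (HRS : vol n w r S / vol n w r fullset <> 1/2)
  (lam : nat -> R) (Hlam : eigenvalue_list n w r lam)
  (tau : R)
  (Htau : tau > / lam 1%nat *
            ln (sqrt (vol n w r S) * sqrt (vol n w r (complement S)) /
                (sqrt (vol n w r fullset) *
                 Rabs (vol n w r S / vol n w r fullset - 1/2) *
                 Rpower (dmin n w) (r / 2))))
  (u : R -> nat -> R) (Hu : heat_solution n w r (chi S) u) :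
  (vol n w r S / vol n w r fullset > 1/2 ->
     forall i, (i < n)%nat -> u tau i >= 1/2) /\
  (vol n w r S / vol n w r fullset < 1/2 ->
     forall i, (i < n)%nat -> ~ (u tau i >= 1/2)).
Proof.
  destruct Hw as [Hsym [Hw0 [_ Hdeg]]]; destruct Hlam as [Hsort [v [Hev Hind]]].
  destruct HSne as [i0 [Hi0 HS0]]; destruct HSnV as [i1 [Hi1 HS1]].
  assert (Hn : (1 < n)%nat) by (assert (i0 <> i1) by congruence; lia).
  pose proof (vol_pos n w r S i0 Hi0 HS0) as Ha.
  pose proof (vol_pos n w r (complement S) i1 Hi1 ltac:(unfold complement; now rewrite HS1)) as Hb.
  pose proof (vol_complement n w r S) as HV.
  set (R0 := vol n w r S / vol n w r fullset) in *.
  set (m := Rpower (dmin n w) r).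
  set (q := Rpower (dmin n w) (r / 2)) in *.
  assert (Hm : forall k, (k < n)%nat -> m <= dpow n w r k)
    by (intros; apply dpow_ge_dmin; [lra | exact Hdeg | assumption]).
  assert (Hqq : q * q = m) by (unfold q, m; rewrite <- Rpower_plus; f_equal; field).
  set (E := fun t => dot n w r (fun i => u t i - R0) (fun i => u t i - R0)).
  assert (HE0 : E 0 = dot n w r (fun i => chi S i - R0) (fun i => chi S i - R0))
    by (apply dot_ext; intros i Hi; now rewrite (proj1 Hu)).
  destruct (threshold_ratio_sq _ _ (vol n w r fullset) (R0 - 1/2) q Ha Hb ltac:(lra) ltac:(lra)
              ltac:(apply exp_pos)) as [HA HEA].
  assert (HEt : E tau < (R0 - 1/2) * (R0 - 1/2) * m).
  { pose proof (eig1_pos n w r lam v Hsym Hw0 Hev Hind Hsort Hn Hconn) as Hlam1.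
    apply (decay_below_threshold (lam 1%nat) _ _ (E 0) _ tau Hlam1 HA); [| | |exact Htau|].
    - apply Rmult_lt_0_compat; [apply Rsqr_pos_lt; lra | apply exp_pos].
    - rewrite HE0; apply dot_chi_sub_gt with i0 i1; try assumption; apply exp_pos.
    - rewrite HE0, dot_chi_sub_mean, HEA, Hqq by lra; ring.
    - intros Htau0; apply (heat_energy_decay n w r (chi S) u Hsym Hu); [| |exact Htau0].
      + rewrite <- vol_dot, <- vol_fullset; unfold R0; field; lra.
      + exact (poincare n w r lam v Hsym Hw0 Hev Hind Hsort Hn). }
  assert (Hpt : forall i, (i < n)%nat ->
                 (u tau i - R0) * (u tau i - R0) < (R0 - 1/2) * (R0 - 1/2)).
  { intros i Hi; apply (Rmult_lt_reg_l m); [apply exp_pos|].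
    pose proof (dot_sq_ge_term n w r m (fun i => u tau i - R0) i Hm Hi).
    fold (E tau) in *; lra. }
  split; intros HR i Hi; specialize (Hpt i Hi); nra.
Qed.
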